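(* Let $K$ be a totally real number field. If $\alpha\in\mathcal{O}_K^+$ lies on the sail $\mathcal{S}_K$ (i.e. $\iota_M(\alpha)\in\mathcal{S}_K$), then $\alpha$ is indecomposable.
   Context: Let $n=[K:\mathbb{Q}]$, $\tau_1,\dots,\tau_n$ the real embeddings, $\iota_M:K\to\mathbb{R}^n$, $\alpha\mapsto(\tau_1(\alpha),\dots,\tau_n(\alpha))$ the Minkowski embedding and $\Lambda=\iota_M(\mathcal{O}_K)$. $\mathcal{O}_K^+$ is the set of totally positive elements of $\mathcal{O}_K$, so $\iota_M(\mathcal{O}_K^+)=\Lambda\cap\mathbb{R}_{>0}^n$. The Klein polyhedron is the convex hull $\mathcal{K}_K=\operatorname{Conv}(\Lambda\cap\mathbb{R}_{>0}^n)$ and the sail $\mathcal{S}_K$ is its boundary. An element $\alpha\in\mathcal{O}_K^+$ is indecomposable if it cannot be written as $\beta+\gamma$ with $\beta,\gamma\in\mathcal{O}_K^+$. *)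

From HB Require Import structures.
From mathcomp Require Import all_boot all_order all_algebra all_field.
From mathcomp Require Import all_classical all_reals all_analysis.
Set Implicit Arguments. Unset Strict Implicit. Unset Printing Implicit Defensive.
Import Order.TTheory GRing.Theory Num.Theory.
Import numFieldNormedType.Exports.
Local Open Scope ring_scope.
Local Open Scope classical_set_scope.

Definition is_alg_int (K : fieldExtType rat) (a : K) : Prop :=
  exists p : {poly int}, p \is monic /\ root (map_poly (fun z : int => z%:~R : K) p) a.

Definition degQ (K : fieldExtType rat) : nat := \dim (fullv : {vspace K}).

Definition tot_pos_int (K : fieldExtType rat) (R : realType) (n : nat)
  (tau : 'I_n -> {rmorphism K -> R}) (a : K) : Prop :=
  is_alg_int a /\ forall i, 0 < tau i a.

Definition minkowski_emb (K : fieldExtType rat) (R : realType) (n : nat)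
  (tau : 'I_n -> {rmorphism K -> R}) (a : K) : 'rV[R]_n :=
  \row_i tau i a.

Definition conv_hull (R : realType) (n : nat) (A : set 'rV[R]_n) : set 'rV[R]_n :=
  [set x | exists (m : nat) (lam : 'I_m -> R) (v : 'I_m -> 'rV[R]_n),
      (forall j, 0 <= lam j) /\ \sum_(j < m) lam j = 1 /\
      (forall j, A (v j)) /\ x = \sum_(j < m) lam j *: v j].

Definition boundary (R : realType) (n : nat) (A : set 'rV[R]_n) : set 'rV[R]_n :=
  closure A `\` interior A.

(* Klein polyhedron: convex hull of Lambda ∩ R_{>0}^n = iota_M(O_K^+) *)
Definition klein_polyhedron (K : fieldExtType rat) (R : realType) (n : nat)
  (tau : 'I_n -> {rmorphism K -> R}) : set 'rV[R]_n :=
  conv_hull (minkowski_emb tau @` [set a | tot_pos_int tau a]).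

Definition sail (K : fieldExtType rat) (R : realType) (n : nat)
  (tau : 'I_n -> {rmorphism K -> R}) : set 'rV[R]_n :=
  boundary (klein_polyhedron tau).

Definition indecomposable (K : fieldExtType rat) (R : realType) (n : nat)
  (tau : 'I_n -> {rmorphism K -> R}) (a : K) : Prop :=
  tot_pos_int tau a /\
  ~ (exists b c : K, tot_pos_int tau b /\ tot_pos_int tau c /\ a = b + c).

From HB Require Import structures.
From mathcomp Require Import all_boot all_order all_algebra all_field.
From mathcomp Require Import all_classical all_reals all_analysis.
From mathcomp Require Import ring lra.
Import Order.TTheory GRing.Theory Num.Theory.
Import numFieldNormedType.Exports.
Set Implicit Arguments.
Unset Strict Implicit.
Unset Printing Implicit Defensive.

Local Open Scope ring_scope.

(* If a = b + c with b, c totally positive integers, then iota(a) is an interior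
   point of the Klein polyhedron, hence not on the sail.  By Dedekind's independence
   of characters, a Q-basis of K scaled into O_K gives algebraic integers w_1..w_n
   whose images form a basis of R^n; choose N so large that y = b + N c +- w_j are
   all totally positive.  Since iota(a) = (1 - 1/N) iota(b) + iota(y) / N, every z
   close to iota(a) is (1 - 1/N) iota(b) + (iota(y) + sum_j t_j iota(w_j)) / N with
   sum_j |t_j| <= 1, a convex combination of iota(b), iota(y) and the iota(y +- w_j). *)


Section AlgebraicIntegers.
Variable K : fieldExtType rat.
Implicit Types x y : K.

Lemma is_alg_intE x : is_alg_int x <-> integralOver intr x.
Proof. by split=> [[p [mp rp]] | [p mp rp]]; exists p. Qed.

Lemma is_alg_int_nat n : is_alg_int (n%:R : K).
Proof. exact/is_alg_intE/integral_nat. Qed.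

Lemma is_alg_intN x : is_alg_int x -> is_alg_int (- x).
Proof. by move/is_alg_intE/integral_opp/is_alg_intE. Qed.

Lemma is_alg_intD x y : is_alg_int x -> is_alg_int y -> is_alg_int (x + y).
Proof. by move=> /is_alg_intE ix /is_alg_intE iy; apply/is_alg_intE/integral_add. Qed.

Lemma is_alg_intM x y : is_alg_int x -> is_alg_int y -> is_alg_int (x * y).
Proof. by move=> /is_alg_intE ix /is_alg_intE iy; apply/is_alg_intE/integral_mul. Qed.

(* If q(x) = 0 with deg q = m and leading coefficient l, then l x is a root of the
   monic polynomial l^(m-1) q(X / l), whose coefficients q_k l^(m-1-k) are integers. *)
Lemma is_alg_int_lead_coef_mul x (q : {poly int}) :
  (1 < size q)%N -> root (map_poly intr q) x -> is_alg_int ((lead_coef q)%:~R * x).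
Proof.
move=> q_gt1 qx0; set l := lead_coef q; set m := (size q).-1.
have m_gt0 : (0 < m)%N by rewrite -ltnS prednK // ltnW.
have size_q : size q = m.+1 by rewrite prednK // ltnW.
pose E k := if k == m then 1 else q`_k * l ^+ (m.-1 - k).
exists (\poly_(k < m.+1) E k); split.
  by rewrite monicE lead_coef_poly //= /E eqxx ?oner_neq0.
have size_E : (size (map_poly intr (\poly_(k < m.+1) E k) : {poly K}) <= m.+1)%N.
  by apply: leq_trans (size_poly _ _) _; rewrite size_poly.
rewrite /root (horner_coef_wide _ size_E); apply/eqP.
have size_qK : (size (map_poly intr q : {poly K}) <= m.+1)%N.
  by apply: leq_trans (size_poly _ _) _; rewrite size_q.
move/eqP: qx0; rewrite (horner_coef_wide _ size_qK) => qx0.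
rewrite -[RHS](mulr0 ((l%:~R : K) ^+ m.-1)) -[X in _ = _ * X]qx0 mulr_sumr.
apply: eq_bigr => i _.
rewrite !coef_map /= coef_poly ltn_ord /E.
case: eqP => [-> | /eqP i_neq_m].
  have -> : q`_m = l by rewrite /l lead_coefE size_q.
  by rewrite exprMn mul1r mulrA -exprSr prednK.
have i_le : (i <= m.-1)%N by rewrite -ltnS prednK // ltn_neqAle i_neq_m -ltnS ltn_ord.
rewrite rmorphM rmorphXn /= exprMn -{2}(subnK i_le) exprD.
by rewrite !mulrA; congr (_ * _); rewrite [in RHS]mulrC mulrA.
Qed.

Lemma exists_alg_int_multiple x : exists2 l : int, l != 0 & is_alg_int (l%:~R * x).
Proof.
have [p p_monic px0] := alg_integral x.
have [q [a a_neq0 p_def]] := rat_poly_scale p.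
have size_p : (1 < size p)%N.
  rewrite -(size_map_poly (in_alg K)); apply: (root_size_gt1 _ px0).
  by rewrite map_poly_eq0 monic_neq0.
have size_q : (1 < size q)%N.
  rewrite -(size_rat_int_poly q) -(size_scale _ (invr_neq0 (x := a%:~R) _)) -?p_def //.
  by rewrite intr_eq0.
exists (lead_coef q).
  by rewrite lead_coef_eq0 -size_poly_eq0 -lt0n (ltn_trans _ size_q).
apply: is_alg_int_lead_coef_mul => //.
move: px0; rewrite p_def map_polyZ /root hornerZ mulf_eq0 fmorph_eq0 invr_eq0 intr_eq0.
rewrite (negbTE a_neq0) /= -map_poly_comp.
by rewrite (@eq_map_poly _ _ _ intr) // => z /=; rewrite scaler_int.
Qed.

End AlgebraicIntegers.

(* Dedekind's independence of characters; the induction is on the support of c,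
   which shrinks when c_i is replaced by c_i (tau_i y - tau_i0 y). *)
Lemma rmorph_independent (K L : fieldType) n (tau : 'I_n -> {rmorphism K -> L}) :
  (forall i j, (forall x, tau i x = tau j x) -> i = j) ->
  forall c : 'I_n -> L, (forall x, \sum_i c i * tau i x = 0) -> forall i, c i = 0.
Proof.
move=> tau_inj c.
move: {2}#|[set i | c i != 0]| (leqnn #|[set i | c i != 0]|) => s.
elim: s c => [|s IHs] c supp_c sum_c0 i0; apply/eqP/negP => /negP ci0.
  by move: supp_c; rewrite leqn0 => /eqP/cards0_eq/setP/(_ i0); rewrite !inE ci0.
have [[j [j_neq cj]] | c_single] := pselect (exists j, j != i0 /\ c j != 0); last first.
  move: (sum_c0 1); rewrite (bigD1 i0) //= big1 ?addr0 ?rmorph1 ?mulr1 => [|j j_neq].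
    by move/eqP; rewrite (negbTE ci0).
  by rewrite rmorph1 mulr1; apply/eqP/negPn/negP => cj; apply: c_single; exists j.
have [y tau_y] : exists y, tau j y != tau i0 y.
  apply/not_existsP => same; move: j_neq; rewrite (tau_inj j i0) ?eqxx // => x.
  by apply/eqP/negPn/negP/same.
pose c' k := c k * (tau k y - tau i0 y).
have sum_c'0 x : \sum_i c' i * tau i x = 0.
  transitivity (\sum_i c i * tau i (y * x) - tau i0 y * \sum_i c i * tau i x).
    by rewrite mulr_sumr -sumrB; apply: eq_bigr => k _; rewrite /c' rmorphM /=; ring.
  by rewrite !sum_c0 mulr0 subr0.
have supp_c' : (#|[set i | c' i != 0%R]| <= s)%N.
  have supp_sub : [set i | c' i != 0] \subset [set i | c i != 0] :\ i0.
    apply/fintype.subsetP => k; rewrite !inE /c' mulf_eq0 negb_or subr_eq0.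
    by case/andP=> -> tau_k; rewrite andbT; apply: contraNneq tau_k => ->.
  apply: leq_trans (subset_leq_card supp_sub) _; rewrite -ltnS; apply: leq_trans supp_c.
  by rewrite (cardsD1 i0 [set i | c i != 0]) inE ci0.
move/eqP: (IHs c' supp_c' sum_c'0 j).
by rewrite /c' mulf_eq0 (negbTE cj) subr_eq0 (negbTE tau_y).
Qed.

Section MinkowskiBasis.
Variables (K : fieldExtType rat) (R : realType).
Variable tau : 'I_(degQ K) -> {rmorphism K -> R}.
Hypothesis tau_inj : forall i j, (forall x, tau i x = tau j x) -> i = j.

Lemma minkowski_emb_unitmx (w : 'I_(degQ K) -> K) :
  (forall x, exists q : 'I_(degQ K) -> rat, x = \sum_j q j *: w j) ->
  \matrix_j minkowski_emb tau (w j) \in unitmx.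
Proof.
move=> w_span; set M := \matrix_j _; apply/negPn/negP => M_sing.
have /rowV0Pn[u /sub_kermxP uM u_neq0] : kermx M^T != 0.
  by rewrite kermx_eq0 row_free_unit unitmx_tr.
have u_w j : \sum_i u 0 i * tau i (w j) = 0.
  move/rowP/(_ j): uM; rewrite !mxE => uMj.
  by rewrite -[RHS]uMj; apply: eq_bigr => i _; rewrite !mxE.
have u_rel x : \sum_i u 0 i * tau i x = 0.
  have [q ->] := w_span x.
  under eq_bigr do rewrite rmorph_sum mulr_sumr.
  rewrite exchange_big /= big1 // => k _.
  under eq_bigr do rewrite rmorphZ_num mulrCA.
  by rewrite -mulr_sumr u_w mulr0.
apply/negP: u_neq0; apply/negPn/eqP/rowP => i; rewrite mxE.
exact: rmorph_independent tau_inj _ u_rel i.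
Qed.

Lemma alg_int_minkowski_basis : exists2 w : 'I_(degQ K) -> K,
  forall j, is_alg_int (w j) & \matrix_j minkowski_emb tau (w j) \in unitmx.
Proof.
pose e (j : 'I_(degQ K)) := (vbasis (fullv : {vspace K}))`_j.
have /choice[l l_spec] : forall j, exists l : int, l != 0 /\ is_alg_int (l%:~R * e j).
  by move=> j; have [l] := exists_alg_int_multiple (e j); exists l.
exists (fun j => (l j)%:~R * e j) => [j | ]; first by case: (l_spec j).
apply: minkowski_emb_unitmx => x.
exists (fun j => coord (vbasis fullv) j x / (l j)%:~R).
rewrite {1}(coord_vbasis (memvf x)); apply: eq_bigr => j _.
by rewrite mulrzl -scaler_int scalerA divfK // intr_eq0; case: (l_spec j).
Qed.

End MinkowskiBasis.

Local Open Scope classical_set_scope.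

Section ConvexHull.
Variables (R : realType) (n : nat).
Implicit Types (A : set 'rV[R]_n) (x y : 'rV[R]_n).

Lemma conv_hull_fin A (T : finType) (lam : T -> R) (v : T -> 'rV[R]_n) :
  (forall t, 0 <= lam t) -> \sum_t lam t = 1 -> (forall t, A (v t)) ->
  conv_hull A (\sum_t lam t *: v t).
Proof.
move=> lam_ge0 lam_sum1 Av.
exists #|T|, (lam \o enum_val), (v \o enum_val).
have enum_bij : {on [pred t : T | true], bijective (@enum_val T T)}.
  exact/onW_bij/enum_val_bij.
split=> [j | ]; first exact: lam_ge0.
split; first by rewrite -lam_sum1 (reindex _ enum_bij).
by split=> [j | ]; [exact: Av | rewrite (reindex _ enum_bij)].
Qed.

Lemma conv_hullW A x : A x -> conv_hull A x.
Proof.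
move=> Ax; have := @conv_hull_fin A 'I_1 (fun=> 1) (fun=> x).
by rewrite !big_ord1 scale1r; apply.
Qed.

Lemma conv_hull_convex A x x' s :
  conv_hull A x -> conv_hull A x' -> 0 <= s <= 1 -> conv_hull A ((1 - s) *: x + s *: x').
Proof.
move=> [p [lam [v [lam_ge0 [lam1 [Av ->]]]]]] [q [mu [v' [mu_ge0 [mu1 [Av' ->]]]]]].
case/andP=> s_ge0 s_le1.
pose c (k : 'I_p + 'I_q) := match k with inl j => (1 - s) * lam j | inr j => s * mu j end.
pose u (k : 'I_p + 'I_q) := match k with inl j => v j | inr j => v' j end.
have -> : (1 - s) *: \sum_j lam j *: v j + s *: \sum_j mu j *: v' j = \sum_k c k *: u k.
  by rewrite big_sumType !scaler_sumr; congr (_ + _); apply: eq_bigr => j _; rewrite scalerA.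
apply: conv_hull_fin => [[j|j] /= | | [j|j] //=].
- by rewrite mulr_ge0 // subr_ge0.
- by rewrite mulr_ge0.
- by rewrite big_sumType /= -!mulr_sumr lam1 mu1 !mulr1 subrK.
Qed.

Lemma conv_hull_cross A y m (v : 'I_m -> 'rV[R]_n) (t : 'I_m -> R) :
  A y -> (forall j, A (y + v j)) -> (forall j, A (y - v j)) -> \sum_j `|t j| <= 1 ->
  conv_hull A (y + \sum_j t j *: v j).
Proof.
move=> Ay Ayv Ayv' t_le1.
pose p j := if 0 <= t j then y + v j else y - v j.
have tp j : `|t j| *: p j = `|t j| *: y + t j *: v j.
  rewrite /p; case: ifP => [t_ge0 | /negbT t_lt0]; first by rewrite ger0_norm // scalerDr.
  by rewrite ltr0_norm ?ltNge // scalerBr !scaleNr opprK.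
pose c (k : 'I_1 + 'I_m) := match k with inl _ => 1 - \sum_j `|t j| | inr j => `|t j| end.
pose u (k : 'I_1 + 'I_m) := match k with inl _ => y | inr j => p j end.
have cu_eq : \sum_k c k *: u k = y + \sum_j t j *: v j.
  rewrite big_sumType big_ord1 /c /u /= (eq_bigr _ (fun i _ => tp i)).
  by rewrite big_split /= -scaler_suml scalerBl scale1r addrA subrK.
rewrite -cu_eq.
apply: conv_hull_fin => [[_|j] /= | | [_|j] /=].
- by rewrite subr_ge0.
- by [].
- by rewrite big_sumType big_ord1 /= subrK.
- by [].
- by rewrite /p; case: ifP.
Qed.

Lemma interior_box A x (e : R) : 0 < e ->
  (forall y, (forall i, `|x 0 i - y 0 i| < e) -> A y) -> interior A x.
Proof.
move=> e_gt0 boxA; apply/nbhs_ballP; exists e => // y [_ xy].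
by apply: boxA => i; have := xy 0 i.
Qed.

End ConvexHull.

Lemma exists_small_l1_mulmx (R : realFieldType) m p (M : 'M[R]_(m, p)) :
  exists2 eps : R, 0 < eps &
    forall d : 'rV_m, (forall i, `|d 0 i| <= eps) -> \sum_j `|(d *m M) 0 j| <= 1.
Proof.
pose S := \sum_j \sum_i `|M i j|.
have S_ge0 : 0 <= S by rewrite sumr_ge0 // => j _; rewrite sumr_ge0.
exists (S + 1)^-1 => [|d d_small]; first by rewrite invr_gt0 ltr_wpDl.
apply: le_trans (_ : (S + 1)^-1 * S <= 1); last first.
  by rewrite ler_pdivrMl ?ltr_wpDl // mulr1 lerDl.
rewrite mulr_sumr; apply: ler_sum => j _; rewrite mxE mulr_sumr.
apply: le_trans (ler_norm_sum _ _ _) _; apply: ler_sum => i _.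
by rewrite normrM ler_wpM2r.
Qed.

Lemma exists_nat_dominating (R : archiFieldType) (I J : finType)
    (f : I -> J -> R) (g : I -> R) :
  (forall i, 0 < g i) -> exists N : nat, forall i j, `|f i j| < N.+1%:R * g i.
Proof.
move=> g_gt0; pose T := \sum_i \sum_j `|f i j| / g i.
exists (Num.truncn T) => i j; rewrite -ltr_pdivrMr //.
apply: le_lt_trans (truncnS_gt T).
have le_sum (K : finType) (F : K -> R) k : (forall k, 0 <= F k) -> F k <= \sum_k F k.
  by move=> F_ge0; rewrite (bigD1 k) //= lerDl sumr_ge0.
apply: le_trans (le_sum _ (fun j => `|f i j| / g i) j _) _ => [k|].
  by rewrite divr_ge0 // ltW.
apply: (le_sum _ (fun i => \sum_k `|f i k| / g i)) => k.
by rewrite sumr_ge0 // => l _; rewrite divr_ge0 // ltW.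
Qed.

Section KleinPolyhedron.
Variables (K : fieldExtType rat) (R : realType) (n : nat).
Variable tau : 'I_n -> {rmorphism K -> R}.
Implicit Types x y b c : K.

Lemma minkowski_embD x y :
  minkowski_emb tau (x + y) = minkowski_emb tau x + minkowski_emb tau y.
Proof. by apply/rowP => i; rewrite !mxE rmorphD. Qed.

Lemma minkowski_embN x : minkowski_emb tau (- x) = - minkowski_emb tau x.
Proof. by apply/rowP => i; rewrite !mxE rmorphN. Qed.

Lemma tot_pos_intD x y : tot_pos_int tau x -> tot_pos_int tau y -> tot_pos_int tau (x + y).
Proof.
move=> [x_int x_pos] [y_int y_pos]; split; first exact: is_alg_intD.
by move=> i; rewrite rmorphD addr_gt0.
Qed.

Lemma tot_pos_int_natM k x : (0 < k)%N -> tot_pos_int tau x -> tot_pos_int tau (k%:R * x).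
Proof.
move=> k_gt0 [x_int x_pos]; split; first by apply: is_alg_intM => //; apply: is_alg_int_nat.
by move=> i; rewrite rmorphM rmorph_nat mulr_gt0 ?ltr0n.
Qed.

Lemma tot_pos_int_shift y s : tot_pos_int tau y -> is_alg_int s ->
  (forall i, `|tau i s| < tau i y) -> tot_pos_int tau (y + s).
Proof.
move=> [y_int y_pos] s_int s_small; split; first exact: is_alg_intD.
by move=> i; move: (s_small i); rewrite rmorphD ltr_norml => /andP[+ _]; lra.
Qed.

Lemma tot_pos_int_cross b c m (w : 'I_m -> K) :
  tot_pos_int tau b -> tot_pos_int tau c -> (forall j, is_alg_int (w j)) ->
  exists N : nat, forall j, tot_pos_int tau (b + N.+1%:R * c + w j)
                         /\ tot_pos_int tau (b + N.+1%:R * c - w j).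
Proof.
move=> b_pos c_pos w_int.
have [N w_small] := exists_nat_dominating (fun i j => tau i (w j)) c_pos.2.
have y_pos := tot_pos_intD b_pos (tot_pos_int_natM (ltn0Sn N) c_pos).
have y_big i j : `|tau i (w j)| < tau i (b + N.+1%:R * c).
  by rewrite rmorphD rmorphM rmorph_nat ltr_wpDl ?ltW ?b_pos.2 ?w_small.
exists N => j; split; apply: tot_pos_int_shift => // [|i]; first exact: is_alg_intN.
by rewrite rmorphN normrN.
Qed.

End KleinPolyhedron.

Lemma minkowski_emb_add_interior (K : fieldExtType rat) (R : realType)
    (tau : 'I_(degQ K) -> {rmorphism K -> R}) :
  (forall i j, (forall x, tau i x = tau j x) -> i = j) ->
  forall b c, tot_pos_int tau b -> tot_pos_int tau c ->
  interior (klein_polyhedron tau) (minkowski_emb tau (b + c)).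
Proof.
move=> tau_inj b c b_pos c_pos.
have [w w_int M_unit] := alg_int_minkowski_basis tau_inj.
set M := \matrix_j minkowski_emb tau (w j) in M_unit.
have [N y_cross] := tot_pos_int_cross b_pos c_pos w_int.
set y := b + N.+1%:R * c in y_cross.
have y_pos : tot_pos_int tau y := tot_pos_intD b_pos (tot_pos_int_natM (ltn0Sn N) c_pos).
set k : R := N.+1%:R; have k_gt0 : 0 < k by rewrite ltr0n.
have [eps eps_gt0 t_small] := exists_small_l1_mulmx (invmx M).
apply: (interior_box (e := eps / k)) => [|z z_near]; first by rewrite divr_gt0.
pose t := (k *: (z - minkowski_emb tau (b + c))) *m invmx M.
have tM : \sum_j t 0 j *: minkowski_emb tau (w j) = k *: (z - minkowski_emb tau (b + c)).
  rewrite -[RHS]mulmx1 -(mulVmx M_unit) mulmxA mulmx_sum_row.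
  by apply: eq_bigr => j _; rewrite rowK.
have -> : z = (1 - k^-1) *: minkowski_emb tau b
              + k^-1 *: (minkowski_emb tau y + \sum_j t 0 j *: minkowski_emb tau (w j)).
  rewrite tM; apply/rowP => i; rewrite !mxE /y !rmorphD rmorphM rmorph_nat -/k.
  by field; rewrite gt_eqF.
apply: conv_hull_convex.
- by apply: conv_hullW; exists b.
- apply: conv_hull_cross => [|j|j|]; first by exists y.
  + by exists (y + w j); [case: (y_cross j) | rewrite minkowski_embD].
  + by exists (y - w j); [case: (y_cross j) | rewrite minkowski_embD minkowski_embN].
  apply: t_small => i; rewrite mxE normrM (ger0_norm (ltW k_gt0)) mulrC -ler_pdivlMr //.
  by move: (z_near i); rewrite !mxE distrC => /ltW.
- by rewrite invr_ge0 ltW //= invf_le1 // ler1n.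
Qed.

Theorem theorem2p4 (K : fieldExtType rat) (R : realType)
  (tau : 'I_(degQ K) -> {rmorphism K -> R})
  (tau_inj : forall i j, (forall x, tau i x = tau j x) -> i = j)
  (a : K) :
  tot_pos_int tau a -> sail tau (minkowski_emb tau a) -> indecomposable tau a.
Proof.
move=> a_pos [_ a_not_interior]; split=> // -[b [c [b_pos [c_pos a_eq]]]].
by apply: a_not_interior; rewrite a_eq; apply: minkowski_emb_add_interior.
Qed.
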